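(* Let $N\ge2$ and let $Y$ be a real symmetric $N\times N$ matrix. If $\|Y-I\|_F^2\le1$, then $Y$ is scaled diagonally dominant. If $\|Y-I\|_F^2\le\frac{2}{N+1}$, then $Y$ is diagonally dominant.
   Context: A symmetric matrix $X$ is diagonally dominant if $X(i,i)\ge\sum_{j\ne i}|X(i,j)|$ for all $i$; it is scaled diagonally dominant if $X=DYD$ for some positive diagonal matrix $D$ and some diagonally dominant $Y$. *)

From mathcomp Require Import all_boot all_order all_algebra.
From mathcomp Require Import reals.
Set Implicit Arguments. Unset Strict Implicit. Unset Printing Implicit Defensive.
Import Order.TTheory GRing.Theory Num.Theory.
Local Open Scope ring_scope.

Definition symmetric_mx (R : ringType) (n : nat) (X : 'M[R]_n) : Prop := X^T = X.

Definition diag_dominant (R : numDomainType) (n : nat) (X : 'M[R]_n) : Prop :=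
  forall i : 'I_n, \sum_(j < n | j != i) `|X i j| <= X i i.

(* X = D Y D for some positive diagonal D and diagonally dominant Y
   (Y is then automatically symmetric when X is). *)
Definition scaled_diag_dominant (R : numDomainType) (n : nat) (X : 'M[R]_n) : Prop :=
  exists (d : 'rV[R]_n) (Y : 'M[R]_n),
    (forall i, 0 < d 0 i) /\ diag_dominant Y /\ X = diag_mx d *m Y *m diag_mx d.

Definition frob_sq (R : ringType) (m n : nat) (A : 'M[R]_(m, n)) : R :=
  \sum_(i < m) \sum_(j < n) A i j ^+ 2.

From mathcomp Require Import all_boot all_order all_algebra.
From mathcomp Require Import reals ring lra.
Set Implicit Arguments. Unset Strict Implicit. Unset Printing Implicit Defensive.
Import Order.TTheory GRing.Theory Num.Theory.
Local Open Scope ring_scope.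

(* Write r_i^2 for the squared off-diagonal norm of row i and a_i = Y_ii - 1,
   so that ||Y - I||_F^2 = sum_i (a_i^2 + r_i^2).

   Diagonal dominance: by symmetry, row i and column i together give
   a_i^2 + 2 r_i^2 <= ||Y - I||_F^2, and Cauchy-Schwarz bounds the off-diagonal
   absolute row sum by sqrt(N - 1) r_i.  Minimising the resulting quadratic in a_i
   shows that the bound 2/(N+1) is exactly what forces that sum below 1 + a_i.

   Scaled diagonal dominance: take the weights w_i = r_i / sqrt(Y_ii^2 + r_i^2).
   Since w_i^2 <= a_i^2 + r_i^2, the weights have total square mass at most 1,
   so Cauchy-Schwarz gives sum_{j<>i} |Y_ij| w_j <= r_i sqrt(1 - w_i^2) = Y_ii w_i,
   i.e. diag(w) Y diag(w) is diagonally dominant. *)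

Lemma cauchy_schwarz (R : realFieldType) (n : nat) (P : pred 'I_n) (x y : 'I_n -> R) :
  (\sum_(j | P j) x j * y j) ^+ 2 <=
  (\sum_(j | P j) x j ^+ 2) * (\sum_(j | P j) y j ^+ 2).
Proof.
set Sx := \sum_(j | P j) x j ^+ 2; set Sy := \sum_(j | P j) y j ^+ 2.
set Sxy := \sum_(j | P j) x j * y j.
have lagrange : \sum_(j | P j) \sum_(k | P k) (x j * y k - x k * y j) ^+ 2 =
    \sum_(j | P j) (x j ^+ 2 * Sy + y j ^+ 2 * Sx - 2 * (x j * y j) * Sxy).
  apply: eq_bigr => j _.
  rewrite /Sx /Sy /Sxy !mulr_sumr -big_split -sumrB /=.
  by apply: eq_bigr => k _; ring.
have : 0 <= \sum_(j | P j) \sum_(k | P k) (x j * y k - x k * y j) ^+ 2.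
  by apply: sumr_ge0 => j _; apply: sumr_ge0 => k _; apply: sqr_ge0.
rewrite lagrange !big_split /= sumrN -!mulr_suml -mulr_sumr -/Sx -/Sy -/Sxy.
nra.
Qed.

Lemma symmetric_mxP (R : nzRingType) (n : nat) (Y : 'M[R]_n) :
  symmetric_mx Y -> forall i j, Y j i = Y i j.
Proof. by move=> symY i j; rewrite -[in RHS]symY mxE. Qed.

Definition offdiag_sq (R : pzRingType) (n : nat) (Y : 'M[R]_n) (i : 'I_n) : R :=
  \sum_(j | j != i) Y i j ^+ 2.

Section OffdiagSq.
Variables (R : realDomainType) (n : nat) (Y : 'M[R]_n).

Lemma offdiag_sq_ge0 i : 0 <= offdiag_sq Y i.
Proof. by apply: sumr_ge0 => j _; apply: sqr_ge0. Qed.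

Lemma offdiag_sq_eq0 i j : offdiag_sq Y i = 0 -> j != i -> Y i j = 0.
Proof.
move=> r0 ji; apply/eqP; rewrite -sqrf_eq0; apply/eqP.
by apply: (psumr_eq0P _ r0) => // k _; apply: sqr_ge0.
Qed.

Lemma offdiag_sq_normE i : \sum_(j | j != i) `|Y i j| ^+ 2 = offdiag_sq Y i.
Proof. by apply: eq_bigr => j _; rewrite real_normK // num_real. Qed.

Lemma frob_sq_subr1 :
  frob_sq (Y - 1%:M) = \sum_i ((Y i i - 1) ^+ 2 + offdiag_sq Y i).
Proof.
apply: eq_bigr => i _; rewrite (bigD1 i) //= !mxE eqxx; congr (_ + _).
by apply: eq_bigr => j /negbTE ji; rewrite !mxE eq_sym ji subr0.
Qed.

Lemma row_le_frob_sq i : (Y i i - 1) ^+ 2 + offdiag_sq Y i <= frob_sq (Y - 1%:M).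
Proof.
rewrite frob_sq_subr1 (bigD1 i) //= lerDl; apply: sumr_ge0 => k _.
by rewrite addr_ge0 ?sqr_ge0 ?offdiag_sq_ge0.
Qed.

Lemma row_col_le_frob_sq i : symmetric_mx Y ->
  (Y i i - 1) ^+ 2 + 2 * offdiag_sq Y i <= frob_sq (Y - 1%:M).
Proof.
move=> /symmetric_mxP symY.
rewrite frob_sq_subr1 (bigD1 i) //= mulr2n mulrDl mul1r addrA lerD2l.
rewrite /offdiag_sq [X in X <= _]big_seq_cond [X in _ <= X]big_seq_cond.
apply: ler_sum => k /andP[_ ki].
rewrite -[X in X <= _]add0r lerD ?sqr_ge0 // (bigD1 i) 1?eq_sym //= symY lerDl.
by apply: sumr_ge0 => j _; apply: sqr_ge0.
Qed.

End OffdiagSq.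

Lemma sqr_sum_norm_offdiag (R : realFieldType) (n : nat) (Y : 'M[R]_n) i :
  (\sum_(j | j != i) `|Y i j|) ^+ 2 <= (n%:R - 1) * offdiag_sq Y i.
Proof.
have count_offdiag : \sum_(j | j != i) (1 : R) ^+ 2 = n%:R - 1.
  have : \sum_(j < n) (1 : R) = n%:R by rewrite sumr_const card_ord.
  rewrite (bigD1 i) //= => <-; under eq_bigr do rewrite expr1n.
  by rewrite addrC addrK.
have := cauchy_schwarz (fun j => j != i) (fun _ => 1) (fun j => `|Y i j|).
by rewrite count_offdiag offdiag_sq_normE; under eq_bigr do rewrite mul1r.
Qed.

(* 2 (1 + a)^2 + (n - 1) a^2 - 2 (n - 1) / (n + 1) = ((n + 1) a + 2)^2 / (n + 1). *)
Lemma row_sum_le_diag (R : realFieldType) (n a r rs s : R) :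
  1 <= n -> s * (n + 1) <= 2 -> 0 <= r -> a ^+ 2 + 2 * r <= s ->
  rs ^+ 2 <= (n - 1) * r -> rs <= 1 + a.
Proof.
move=> n1 sn r0 ars rsr; rewrite leNgt; apply/negP => rs_gt.
have [a_lt|a_ge] := ltrP (1 + a) 0; first nra.
have : (n - 1) * a ^+ 2 + 2 * (1 + a) ^+ 2 < (n - 1) * s by nra.
have := sqr_ge0 ((n + 1) * a + 2); nra.
Qed.

Lemma diag_dominant_of_frob_sq (R : realFieldType) (n : nat) (Y : 'M[R]_n) :
  symmetric_mx Y -> frob_sq (Y - 1%:M) <= 2 / (n%:R + 1) -> diag_dominant Y.
Proof.
move=> symY frobY i.
have n1 : 1 <= n%:R :> R by rewrite (ler_nat R 1 n) (leq_trans _ (ltn_ord i)).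
have sn : frob_sq (Y - 1%:M) * (n%:R + 1) <= 2 by rewrite -ler_pdivlMr //; lra.
have -> : Y i i = 1 + (Y i i - 1) by ring.
apply: (row_sum_le_diag n1 sn (offdiag_sq_ge0 Y i) (row_col_le_frob_sq i symY)).
exact: sqr_sum_norm_offdiag.
Qed.

Lemma scaled_diag_dominant_of_weights (R : numFieldType) (n : nat) (Y : 'M[R]_n)
    (u : 'I_n -> R) :
  (forall i, 0 < u i) ->
  (forall i, \sum_(j | j != i) `|Y i j| * u j <= Y i i * u i) ->
  scaled_diag_dominant Y.
Proof.
move=> u_gt0 domY.
exists (\row_i (u i)^-1), (\matrix_(i, j) (Y i j * u i * u j)).
split; first by move=> i; rewrite mxE invr_gt0.
split.
  move=> i; rewrite mxE mulrAC.
  under eq_bigr do rewrite mxE !normrM (gtr0_norm (u_gt0 i)) (gtr0_norm (u_gt0 _)).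
  under eq_bigr do rewrite mulrAC.
  by rewrite -mulr_suml ler_pM2r ?u_gt0 ?domY.
apply/matrixP => i j; rewrite mul_mx_diag mul_diag_mx !mxE.
by field; rewrite !gt_eqF.
Qed.

(* A zero weight can be raised to 1: its row is off-diagonally zero, and by
   symmetry so is its column, so no other row sees the change. *)
Lemma scaled_diag_dominant_of_nneg_weights (R : numFieldType) (n : nat)
    (Y : 'M[R]_n) (w : 'I_n -> R) :
  symmetric_mx Y -> (forall i, 0 <= Y i i) -> (forall i, 0 <= w i) ->
  (forall i j, w i = 0 -> j != i -> Y i j = 0) ->
  (forall i, \sum_(j | j != i) `|Y i j| * w j <= Y i i * w i) ->
  scaled_diag_dominant Y.
Proof.
move=> /symmetric_mxP symY Yii_ge0 w_ge0 w0_row domY.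
pose u i := if w i == 0 then 1 else w i.
apply: (@scaled_diag_dominant_of_weights _ _ _ u) => [i|i].
  by rewrite /u; case: eqP => // /eqP w_neq0; rewrite lt0r w_neq0 w_ge0.
rewrite /u; case: eqP => [wi0|_].
  by rewrite big1 ?mulr1 // => j ji; rewrite w0_row // normr0 mul0r.
rewrite (eq_bigr (fun j => `|Y i j| * w j)) ?domY // => j ji.
case: eqP => // wj0.
by rewrite -symY w0_row 1?eq_sym // normr0 !mul0r.
Qed.

(* The margin is (y^2 - y + r)^2 / (y^2 + r). *)
Lemma ratio_le_sqrB1D (R : realFieldType) (y r : R) :
  0 <= r -> r / (y ^+ 2 + r) <= (y - 1) ^+ 2 + r.
Proof.
move=> r0; have [->|den_neq0] := eqVneq (y ^+ 2 + r) 0.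
  by rewrite invr0 mulr0 addr_ge0 ?sqr_ge0.
have den_gt0 : 0 < y ^+ 2 + r by rewrite lt_def den_neq0 addr_ge0 ?sqr_ge0.
rewrite ler_pdivrMr //; have := sqr_ge0 (y ^+ 2 - y + r); nra.
Qed.

Section FrobeniusWeights.
Variables (R : rcfType) (n : nat) (Y : 'M[R]_n).
Hypothesis frobY : frob_sq (Y - 1%:M) <= 1.

Let ratio i := offdiag_sq Y i / (Y i i ^+ 2 + offdiag_sq Y i).
Let weight i := Num.sqrt (ratio i).

Lemma ratio_ge0 i : 0 <= ratio i.
Proof. by rewrite divr_ge0 ?addr_ge0 ?sqr_ge0 ?offdiag_sq_ge0. Qed.

Lemma weight_sqr i : weight i ^+ 2 = ratio i.
Proof. by rewrite sqr_sqrtr ?ratio_ge0. Qed.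

Lemma diag_ge0_of_frob_sq i : 0 <= Y i i.
Proof.
have := le_trans (row_le_frob_sq Y i) frobY; have := offdiag_sq_ge0 Y i; nra.
Qed.

Lemma weight_eq0_row i j : weight i = 0 -> j != i -> Y i j = 0.
Proof.
move=> /eqP; rewrite sqrtr_eq0 => ratio_le0; apply: offdiag_sq_eq0.
have /eqP : ratio i = 0 by apply/eqP; rewrite eq_le ratio_le0 ratio_ge0.
rewrite mulf_eq0 invr_eq0 => /orP[/eqP //|].
by rewrite paddr_eq0 ?sqr_ge0 ?offdiag_sq_ge0 // => /andP[_ /eqP].
Qed.

Lemma sum_weight_sqr_le1 : \sum_i weight i ^+ 2 <= 1.
Proof.
apply: le_trans frobY; rewrite frob_sq_subr1; apply: ler_sum => i _.
by rewrite weight_sqr ratio_le_sqrB1D ?offdiag_sq_ge0.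
Qed.

Lemma weighted_diag_dominant i :
  \sum_(j | j != i) `|Y i j| * weight j <= Y i i * weight i.
Proof.
rewrite -ler_sqr ?nnegrE ?mulr_ge0 ?diag_ge0_of_frob_sq ?sqrtr_ge0 //; last first.
  by apply: sumr_ge0 => j _; rewrite mulr_ge0 ?sqrtr_ge0.
apply: le_trans (cauchy_schwarz _ (fun j => `|Y i j|) weight) _.
have others : \sum_(j | j != i) weight j ^+ 2 <= 1 - weight i ^+ 2.
  by move: sum_weight_sqr_le1; rewrite (bigD1 i) //=; lra.
rewrite offdiag_sq_normE; apply: le_trans (ler_wpM2l (offdiag_sq_ge0 Y i) others) _.
rewrite exprMn !weight_sqr /ratio; set r := offdiag_sq Y i.
have [den0|den_neq0] := eqVneq (Y i i ^+ 2 + r) 0.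
  have r0 : r = 0 by move: den0 (offdiag_sq_ge0 Y i); rewrite -/r; nra.
  by rewrite r0 !(mul0r, mulr0).
suff -> : r * (1 - r / (Y i i ^+ 2 + r)) = Y i i ^+ 2 * (r / (Y i i ^+ 2 + r)) by [].
by field.
Qed.

Lemma scaled_diag_dominant_of_frob_sq : symmetric_mx Y -> scaled_diag_dominant Y.
Proof.
move=> symY; apply: (scaled_diag_dominant_of_nneg_weights symY) weighted_diag_dominant.
- exact: diag_ge0_of_frob_sq.
- by move=> i; apply: sqrtr_ge0.
- exact: weight_eq0_row.
Qed.

End FrobeniusWeights.

Theorem lemmaB2 (R : realType) (N : nat) (Y : 'M[R]_N) :
  (2 <= N)%N -> symmetric_mx Y ->
  (frob_sq (Y - 1%:M) <= 1 -> scaled_diag_dominant Y) /\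
  (frob_sq (Y - 1%:M) <= 2 / (N%:R + 1) -> diag_dominant Y).
Proof.
move=> _ symY; split => frobY.
- exact: scaled_diag_dominant_of_frob_sq.
- exact: diag_dominant_of_frob_sq.
Qed.
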